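(* Let $\Xi$ be a system. If $\Xi$ has a patchwork solution, then $\Xi$ is solvable.
   Context: A system $\Xi$ is a bipartite graph (undirected, simple) whose vertices are coloured ''pairs'' and ''triples'', together with a set of links $\lambda=(\tau,S)$, where $\tau$ is a triple (the tip) and $S$ is a set of pairs adjacent to $\tau$ (the base vertices; the edges $\{\tau,\pi\}$, $\pi\in S$, are the legs of $\lambda$), and a weight $\mu_\lambda\in\mathbb C^\times$ for each link. The support of $\lambda$ is the subgraph with vertices $S\cup\{\tau\}$ and edges $\{\tau,\pi\}$, $\pi\in S$. A subsystem is a subgraph together with a subset of the links whose support lies in the subgraph (same weights); it is full if it contains all edges of $\Xi$ between its vertices and all links of $\Xi$ supported in it. An edge $\{\tau,\pi\}$ is simply linked if $(\tau,\{\pi\})$ is a link and the edge is a leg of no other link. A solution of a system is an orientation of all its edges such that (S1) every triple has exactly one edge oriented away from it, and that edge is simply linked; (S2) every pair has at most one edge oriented towards it; (S3) there is no oriented cycle. A system is solvable if it has a solution. A patch of $\Xi$ is a full subsystem $\Xi'$ that contains the base vertices of every link of $\Xi$ having a leg in $\Xi'$. A patchwork for $\Xi$ is a family $\{\Xi_k\}_{k\in I}$ of patches indexed by a partially ordered set $I$ such that (P1) every vertex of $\Xi$ lies in some $\Xi_k$; (P2) for $k\ne l$, $\Xi_k$ and $\Xi_l$ have no triple in common; (P3) if $\tau$ is a triple in $\Xi_l$ and $\{\tau,\pi\}$ is an edge of $\Xi$, then $\pi$ is a pair of $\Xi_k$ for some $k\le l$. A patchwork solution is a patchwork together with a solution of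 each patch $\Xi_k$ such that (PS) if $\pi$ is a pair in $\Xi_k\cap\Xi_l$ and some edge $\{\tau,\pi\}$ of $\Xi_k$ is oriented towards $\pi$, then $k\le l$. *)

From mathcomp Require Import all_boot.
Set Implicit Arguments. Unset Strict Implicit. Unset Printing Implicit Defensive.

(* A system on a finite vertex type V.
   - [triple v] : v is coloured "triple"; otherwise v is a "pair".
   - [edge] : adjacency relation of the (simple, undirected, bipartite) graph.
   - [links] : the set of links (tau, S); weights are omitted. *)
Record system (V : finType) := System {
  triple : pred V;
  edge : rel V;
  links : {set V * {set V}}
}.

Definition pair (V : finType) (X : system V) (v : V) : bool := ~~ triple X v.

Definition wf_system (V : finType) (X : system V) : Prop :=
  [/\ symmetric (edge X), irreflexive (edge X),
      (forall x y, edge X x y -> triple X x != triple X y) &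
      (forall tau S, (tau, S) \in links X ->
         triple X tau /\ (forall p, p \in S -> pair X p /\ edge X tau p))].

(* Full subsystems are determined by their vertex set W: they consist of all
   edges of X between vertices of W and all links of X supported in W. *)
Definition link_in (V : finType) (X : system V) (W : {set V}) (l : V * {set V}) : bool :=
  [&& l \in links X, l.1 \in W & l.2 \subset W].

Definition edge_in (V : finType) (X : system V) (W : {set V}) (x y : V) : bool :=
  [&& x \in W, y \in W & edge X x y].

Definition patch (V : finType) (X : system V) (W : {set V}) : Prop :=
  forall tau S p, (tau, S) \in links X -> p \in S -> edge_in X W tau p ->
    S \subset W.

(* An orientation of the edges of the full subsystem W: [a x y] means that the
   edge {x,y} is oriented from x to y. *)
Definition orientation (V : finType) (X : system V) (W : {set V}) (a : rel V) : Prop :=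
  (forall x y, a x y -> edge_in X W x y) /\
  (forall x y, edge_in X W x y -> (a x y || a y x) /\ ~~ (a x y && a y x)).

Definition simply_linked (V : finType) (X : system V) (W : {set V}) (tau p : V) : Prop :=
  edge_in X W tau p /\ link_in X W (tau, [set p]) /\
  (forall S, link_in X W (tau, S) -> p \in S -> S = [set p]).

Definition solution (V : finType) (X : system V) (W : {set V}) (a : rel V) : Prop :=
  [/\ orientation X W a,
      (forall tau, tau \in W -> triple X tau ->
         exists p, [/\ a tau p, simply_linked X W tau p &
                      forall q, a tau q -> q = p]),
      (forall p, p \in W -> pair X p -> #|[set x | a x p]| <= 1) &
      (forall x y, a x y -> ~~ connect a y x)].

Definition solvable (V : finType) (X : system V) : Prop :=
  exists a : rel V, solution X [set: V] a.

Definition partial_order (I : Type) (le : I -> I -> Prop) : Prop :=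
  [/\ forall k, le k k,
      (forall k l, le k l -> le l k -> k = l) &
      (forall k l m, le k l -> le l m -> le k m)].

Definition patchwork (V : finType) (X : system V) (I : Type)
    (le : I -> I -> Prop) (P : I -> {set V}) : Prop :=
  [/\ partial_order le,
      (forall k, patch X (P k)),
      (forall v, exists k, v \in P k),
      (forall k l v, k <> l -> triple X v -> v \in P k -> v \in P l -> False) &
      (forall l tau p, triple X tau -> tau \in P l -> edge X tau p ->
         exists k, le k l /\ pair X p /\ p \in P k)].

Definition patchwork_solution (V : finType) (X : system V) (I : Type)
    (le : I -> I -> Prop) (P : I -> {set V}) (a : I -> rel V) : Prop :=
  [/\ patchwork X le P,
      (forall k, solution X (P k) (a k)) &
      (forall k l p tau, pair X p -> p \in P k -> p \in P l ->
         a k tau p -> le k l)].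

Definition has_patchwork_solution (V : finType) (X : system V) : Prop :=
  exists (I : Type) (le : I -> I -> Prop) (P : I -> {set V}) (a : I -> rel V),
    patchwork_solution X le P a.

From mathcomp Require Import all_boot.
From Stdlib Require Import ClassicalEpsilon.

Set Implicit Arguments.
Unset Strict Implicit.
Unset Printing Implicit Defensive.

(* Choose for every vertex a patch containing it and orient every edge as in
   the patch chosen for its triple.  Along an oriented path the chosen patches
   never go down: if a pair p is entered by an edge of patch m and left
   towards a triple of patch l, then (P3) puts p into a patch k <= l and (PS)
   gives m <= k.  So an oriented cycle lies in a single patch, where it
   contradicts (S3). *)

Lemma connect_to_last (T : finType) (e : rel T) x p :
  path e x p -> {in x :: p, forall z, connect e z (last x p)}.
Proof.
elim: p x => [|y p IHp] x /=; first by move=> _ z; rewrite inE => /eqP->.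
move=> /andP[exy yp] z; rewrite inE => /predU1P[->|zp].
  exact: connect_trans (connect1 exy) (IHp _ yp _ (mem_head _ _)).
by apply: IHp; rewrite // inE zp orbT.
Qed.

Section WellFormed.

Variables (V : finType) (X : system V).
Hypothesis Xwf : wf_system X.

Lemma wf_edge_sym : symmetric (edge X).
Proof. by case: Xwf. Qed.

Lemma edge_triple_pair x y : edge X x y -> triple X x -> pair X y.
Proof.
by case: Xwf => _ _ bip _ /bip; rewrite /pair => /[swap] ->; case: triple.
Qed.

Lemma edge_pair_triple x y : edge X x y -> pair X x -> triple X y.
Proof.
by case: Xwf => _ _ bip _ /bip; rewrite /pair => /[swap] /negbTE ->; case: triple.
Qed.

End WellFormed.

Section Gluing.

Variables (V : finType) (X : system V) (I : Type) (le : I -> I -> Prop).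
Variables (P : I -> {set V}) (a : I -> rel V) (home : V -> I).

Hypothesis Xwf : wf_system X.
Hypotheses (le_refl : forall k, le k k)
  (le_anti : forall k l, le k l -> le l k -> k = l)
  (le_trans : forall k l m, le k l -> le l m -> le k m).
Hypothesis P_patch : forall k, patch X (P k).
Hypothesis P_pairs_below : forall l tau p, triple X tau -> tau \in P l ->
  edge X tau p -> exists k, le k l /\ pair X p /\ p \in P k.
Hypothesis a_sol : forall k, solution X (P k) (a k).
Hypothesis a_in_le : forall k l p tau, pair X p -> p \in P k -> p \in P l ->
  a k tau p -> le k l.
Hypothesis homeP : forall v, v \in P (home v).

(* An edge whose pair lies outside the patch of its triple points to the triple. *)
Definition glued : rel V := fun x y => edge X x y &&
  (if triple X x then (y \in P (home x)) && a (home x) x y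
   else (x \in P (home y)) ==> a (home y) x y).

Definition above (l : I) (v : V) : Prop :=
  if triple X v then le l (home v)
  else exists m t, [/\ le l m, v \in P m & a m t v].

Lemma above_glued l x y : above l x -> glued x y -> above l y.
Proof.
rewrite /above /glued => Hx /andP[exy].
case: (boolP (triple X x)) => tx.
  move=> /andP[yP axy]; rewrite (negbTE (edge_triple_pair Xwf exy tx)).
  by rewrite tx in Hx; exists (home x), x.
move=> _; rewrite (edge_pair_triple Xwf exy tx).
rewrite (negbTE tx) in Hx; case: Hx => m [t [lm xm amt]].
have eyx : edge X y x by rewrite (wf_edge_sym Xwf).
have [k [kley [px xk]]] :=
  P_pairs_below (edge_pair_triple Xwf exy tx) (homeP y) eyx.
exact: le_trans lm (le_trans (a_in_le px xm xk amt) kley).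
Qed.

Lemma above_connect l x y : above l x -> connect glued x y -> above l y.
Proof.
move=> + /connectP[p xp ->]; elim: p x xp => //= z p IHp x /andP[gxz zp] Hx.
exact: IHp zp (above_glued Hx gxz).
Qed.

Lemma above_home_triple v : triple X v -> above (home v) v.
Proof. by rewrite /above => ->. Qed.

Lemma component_in_home tau v : triple X tau ->
  connect glued tau v -> connect glued v tau ->
  v \in P (home tau) /\ (triple X v -> home v = home tau).
Proof.
move=> ttau ctv cvt; have := above_connect (above_home_triple ttau) ctv.
rewrite /above; case: (boolP (triple X v)) => tv.
  move=> le_tv; have := above_connect (above_home_triple tv) cvt.
  by rewrite /above ttau => /(le_anti le_tv) ->.
case=> m [t [lm vm amt]].
have Hv : above m v by rewrite /above (negbTE tv); exists m, t.
have := above_connect Hv cvt; rewrite /above ttau => ml.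
by rewrite (le_anti lm ml).
Qed.

Lemma glued_in_component tau : triple X tau ->
  {in [pred z | connect glued tau z && connect glued z tau] &,
    subrel glued (a (home tau))}.
Proof.
move=> ttau x y /andP[ctx cxt] /andP[cty cyt] /andP[exy].
have [xP xhome] := component_in_home ttau ctx cxt.
have [_ yhome] := component_in_home ttau cty cyt.
case: (boolP (triple X x)) => tx; first by rewrite (xhome tx) => /andP[].
by rewrite (yhome (edge_pair_triple Xwf exy tx)) xP.
Qed.

Lemma glued_orientation : orientation X [set: V] glued.
Proof.
have triple_edge t p : triple X t -> edge X t p ->
    (glued t p || glued p t) && ~~ (glued t p && glued p t).
  move=> tt etp; have ept : edge X p t by rewrite (wf_edge_sym Xwf).
  rewrite /glued etp ept tt (negbTE (edge_triple_pair Xwf etp tt)) /=.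
  case pP: (p \in P (home t)) => //=.
  have [[_ orient] _ _ _] := a_sol (home t).
  have ein : edge_in X (P (home t)) t p by rewrite /edge_in homeP pP.
  by have [-> ->] := orient t p ein.
split=> [x y /andP[exy _]|x y /and3P[_ _ exy]]; first by rewrite /edge_in !inE.
case: (boolP (triple X x)) => tx; first by apply/andP; exact: triple_edge.
have eyx : edge X y x by rewrite (wf_edge_sym Xwf).
have /andP[] := triple_edge _ _ (edge_pair_triple Xwf exy tx) eyx.
by rewrite orbC andbC.
Qed.

Lemma glued_out_edge tau : triple X tau ->
  exists p, [/\ glued tau p, simply_linked X [set: V] tau p &
                forall q, glued tau q -> q = p].
Proof.
move=> ttau; have [_ S1 _ _] := a_sol (home tau).
have [p [atp [etp [lp SL]] uniq_p]] := S1 tau (homeP tau) ttau.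
have /and3P[_ pP e] := etp.
exists p; split.
- by rewrite /glued e ttau pP atp.
- split; first by rewrite /edge_in !inE.
  split; first by move: lp => /and3P[l _ _]; rewrite /link_in l inE subsetT.
  move=> S /and3P[lS _ _] pS; apply: SL => //.
  by rewrite /link_in lS homeP (P_patch lS pS etp).
- by move=> q /andP[_]; rewrite ttau => /andP[_ /uniq_p].
Qed.

Lemma glued_in_edges p : pair X p -> #|[set x | glued x p]| <= 1.
Proof.
move=> pp; apply/card_le1_eqP => x1 x2; rewrite !inE.
have in_patch x : glued x p -> (p \in P (home x)) && a (home x) x p.
  move=> /andP[exp]; have epx : edge X p x by rewrite (wf_edge_sym Xwf).
  by rewrite (edge_pair_triple Xwf epx pp).
move=> /in_patch/andP[p1 a1] /in_patch/andP[p2 a2].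
have e12 := le_anti (a_in_le pp p1 p2 a1) (a_in_le pp p2 p1 a2).
have [_ _ S2 _] := a_sol (home x1).
by move/card_le1_eqP: (S2 p p1 pp); apply; rewrite inE // e12.
Qed.

Lemma glued_acyclic x y : glued x y -> ~~ connect glued y x.
Proof.
move=> gxy; apply/negP => cyx; have cxy := connect1 gxy.
have [tau [ttau cty cyt]] :
    exists tau, [/\ triple X tau, connect glued tau y & connect glued y tau].
  case tx: (triple X x); first by exists x.
  exists y; rewrite connect0; split=> //.
  by case/andP: gxy => exy _; apply: (edge_pair_triple Xwf exy); rewrite /pair tx.
move: cyx => /connectP[q yq qx].
have Cq : all [pred z | connect glued tau z && connect glued z tau] (y :: q).
  apply/allP => z zq; rewrite /= (connect_trans cty (path_connect yq zq)).
  by rewrite (connect_trans (connect_to_last yq zq)) // -qx (connect_trans cxy).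
have x_on_q : x \in y :: q by rewrite qx mem_last.
have [_ _ _ S3] := a_sol (home tau).
have/negP := S3 _ _ (glued_in_component ttau (allP Cq _ x_on_q)
                       (allP Cq _ (mem_head _ _)) gxy).
apply; apply/connectP; exists q => //.
exact: (sub_in_path (glued_in_component ttau)) Cq yq.
Qed.

Lemma glued_solution : solution X [set: V] glued.
Proof.
split; [exact: glued_orientation | | | exact: glued_acyclic].
- by move=> tau _; exact: glued_out_edge.
- by move=> p _; exact: glued_in_edges.
Qed.

End Gluing.

Theorem proposition2p32 (V : finType) (X : system V) :
  wf_system X -> has_patchwork_solution X -> solvable X.
Proof.
move=> Xwf [I [le [P [a [[[le_refl le_anti le_trans] P_patch P_cover _
  P_pairs_below] a_sol a_in_le]]]]].
pose home v := sval (constructive_indefinite_description _ (P_cover v)).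
have homeP v : v \in P (home v) :=
  svalP (constructive_indefinite_description _ (P_cover v)).
exists (glued X P a home).
exact: glued_solution Xwf le_refl le_anti le_trans P_patch P_pairs_below
  a_sol a_in_le homeP.
Qed.
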